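(* Let $G$ be an undirected graph, $(V(G),\mathcal C)$ its corresponding connectoid, and $U\subseteq V(G)$. The following are equivalent: (a) there is a normal tree in $G$ containing $U$; (b) there is a normal tree of $(V(G),\mathcal C)$ containing $U$; (c) there is a weak normal tree of $(V(G),\mathcal C)$ containing $U$.
   Context: A connectoid is given by a set $S$ and a set $\mathcal F$ of finite subsets of $S$ such that (i) $F\cup F'\in\mathcal F$ whenever $F,F'\in\mathcal F$ and $F\cap F'\neq\emptyset$, and (ii) $\emptyset\in\mathcal F$ and $\{s\}\in\mathcal F$ for every $s\in S$. A set $C\subseteq S$ is connected if for all $x,y\in C$ there is $F\in\mathcal F$ with $F\subseteq C$ and $x,y\in F$; $\mathcal C$ is the set of connected sets. The corresponding connectoid of $G$ has $S=V(G)$ and $\mathcal F$ the vertex sets of finite connected subgraphs of $G$, so its connected sets are the vertex sets of connected subgraphs of $G$. For $S'\subseteq S$, $\mathcal K(S')$ denotes the set of maximal connected subsets of $S'$. A necklace is a connected set $N$ for which there is a family $(H_n)_{n\in\mathbb N}$ of finite connected sets with $N=\bigcup_n H_n$ and $H_i\cap H_j\neq\emptyset$ iff $|i-j|\le 1$. For a rooted tree $T$ with tree order $\le_T$ and $t\in V(T)$, let $\mathrm{Down}^\circ_T(t)=\{x\in V(T):x<_T t\}$. A weak normal tree of $(S,\mathcal C)$ is a rooted undirected tree $T$ with $V(T)\subseteq S$ (not required to be a subgraph of anything) such that (1) for every $C\in\mathcal C$ and every two $\le_T$-incomparable $u,v\in C\cap V(T)$ there is $w\in C$ with $w\le_T u$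 and $w\le_T v$, and (2) for all $u\le_T v$ in $V(T)$ there is $C\in\mathcal C$ containing $u,v$ with $C\cap\mathrm{Down}^\circ_T(u)=\emptyset$. It is a normal tree if moreover for every rooted ray $R$ of $T$ some necklace contains all but finitely many vertices of $R$. A tree ''contains $U$'' if $U\subseteq V(T)$. A normal tree in the graph $G$ is a rooted tree $T\subseteq G$ (a subgraph) such that the end vertices of every path in $G$ with only its end vertices in $T$ are $\le_T$-comparable (equivalently, every two vertices of $T$ adjacent in $G$ and, more generally, joined by a $T$-path in $G$, are comparable). *)

From Stdlib Require Import List Arith.
Import ListNotations.

Section Generic.
Context {X : Type}.

Fixpoint chain (R : X -> X -> Prop) (l : list X) : Prop :=
  match l with
  | x :: ((y :: _) as t) => R x y /\ chain R t
  | _ => True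
  end.

Definition path_of (R : X -> X -> Prop) (x y : X) (l : list X) : Prop :=
  hd_error l = Some x /\ last l x = y /\ chain R l /\ NoDup l.

Definition finite_set (A : X -> Prop) : Prop :=
  exists l : list X, forall x, A x -> In x l.

(* (S, Fam) is a connectoid, S being the whole type X *)
Definition is_connectoid (Fam : (X -> Prop) -> Prop) : Prop :=
  (forall F, Fam F -> finite_set F) /\
  (forall F F', Fam F -> Fam F' -> (exists x, F x /\ F' x) ->
      Fam (fun x => F x \/ F' x)) /\
  Fam (fun _ => False) /\
  (forall s, Fam (fun x => x = s)).

Definition conn_set (Fam : (X -> Prop) -> Prop) (C : X -> Prop) : Prop :=
  forall x y, C x -> C y ->
    exists F, Fam F /\ (forall z, F z -> C z) /\ F x /\ F y.

Definition necklace (Fam : (X -> Prop) -> Prop) (N : X -> Prop) : Prop :=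
  conn_set Fam N /\
  exists H : nat -> X -> Prop,
    (forall n, finite_set (H n) /\ conn_set Fam (H n)) /\
    (forall x, N x <-> exists n, H n x) /\
    (forall i j, (exists x, H i x /\ H j x) <-> (i <= j + 1 /\ j <= i + 1)).

Definition is_tree (VT : X -> Prop) (ET : X -> X -> Prop) : Prop :=
  (forall x y, ET x y -> VT x /\ VT y) /\
  (forall x y, ET x y -> ET y x) /\
  (forall x, ~ ET x x) /\
  (forall x y, VT x -> VT y -> exists l, path_of ET x y l) /\
  (forall x y l1 l2, path_of ET x y l1 -> path_of ET x y l2 -> l1 = l2).

Definition is_rooted_tree (VT : X -> Prop) (ET : X -> X -> Prop) (r : X) : Prop :=
  is_tree VT ET /\ VT r.

Definition tle (VT : X -> Prop) (ET : X -> X -> Prop) (r : X) (x y : X) : Prop :=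
  VT x /\ VT y /\ exists l, path_of ET r y l /\ In x l.

Definition tlt VT ET r (x y : X) : Prop := tle VT ET r x y /\ x <> y.

Definition tcomparable VT ET r (x y : X) : Prop :=
  tle VT ET r x y \/ tle VT ET r y x.

Definition down_open VT ET r (t : X) : X -> Prop := fun x => tlt VT ET r x t.

Definition rooted_ray (ET : X -> X -> Prop) (r : X) (R : nat -> X) : Prop :=
  R 0 = r /\ (forall n, ET (R n) (R (S n))) /\
  (forall m n, R m = R n -> m = n).

Definition weak_normal_tree (Fam : (X -> Prop) -> Prop)
    (VT : X -> Prop) (ET : X -> X -> Prop) (r : X) : Prop :=
  is_rooted_tree VT ET r /\
  (forall C, conn_set Fam C ->
     forall u v, C u -> C v -> VT u -> VT v -> ~ tcomparable VT ET r u v ->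
       exists w, C w /\ tle VT ET r w u /\ tle VT ET r w v) /\
  (forall u v, tle VT ET r u v ->
     exists C, conn_set Fam C /\ C u /\ C v /\
       (forall x, C x -> ~ down_open VT ET r u x)).

Definition normal_tree (Fam : (X -> Prop) -> Prop)
    (VT : X -> Prop) (ET : X -> X -> Prop) (r : X) : Prop :=
  weak_normal_tree Fam VT ET r /\
  (forall R, rooted_ray ET r R ->
     exists N, necklace Fam N /\ exists n0, forall n, n0 <= n -> N (R n)).

(* the connectoid of the graph with adjacency E: vertex sets of finite
   connected subgraphs (including the empty one) *)
Definition graph_fam (E : X -> X -> Prop) (F : X -> Prop) : Prop :=
  finite_set F /\
  forall x y, F x -> F y -> exists l, path_of E x y l /\ forall z, In z l -> F z.

Definition graph_normal_tree (E : X -> X -> Prop)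
    (VT : X -> Prop) (ET : X -> X -> Prop) (r : X) : Prop :=
  is_rooted_tree VT ET r /\
  (forall x y, ET x y -> E x y) /\
  (forall x y l, path_of E x y l -> VT x -> VT y ->
     (forall z, In z l -> z <> x -> z <> y -> ~ VT z) ->
     tcomparable VT ET r x y).

End Generic.

(* (a) -> (b): in a normal tree of G, a connected set containing two incomparable tree
   vertices contains a path between them, and the least tree vertex on that path lies
   below both; tree intervals are connected, and each rooted ray of the tree is itself a
   necklace.  (b) -> (c) is trivial.
   (c) -> (a): from a weak normal tree T build a normal tree of G level by level.  At
   stage n every component of G - W has a greatest neighbour m in W; for each vertex t of
   level n of T not yet in W, add a path from m through the component of t to t.  Such
   vertices t lie in distinct components of G - W: a connected set containing two
   incomparable vertices of T contains a common lower bound, which has smaller level and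
   hence lies in W.  The union of the stages is a normal tree of G containing T. *)

From Stdlib Require Import List Arith Lia Classical ClassicalEpsilon.
Import ListNotations.

Section Lists.
Context {X : Type}.
Implicit Types (R : X -> X -> Prop) (l : list X).

Lemma last_cons_self (x : X) l : last (x :: l) x = last l x.
Proof. destruct l; reflexivity. Qed.

Lemma last_cons_cons (x a d : X) l : last (x :: a :: l) d = last (a :: l) d.
Proof. reflexivity. Qed.

Lemma last_default (a d d' : X) l : last (a :: l) d = last (a :: l) d'.
Proof.
  revert a; induction l as [|b l IH]; intros a; [reflexivity|].
  rewrite !last_cons_cons; apply IH.
Qed.

Lemma last_app_cons (d a : X) l1 l2 : last (l1 ++ a :: l2) d = last (a :: l2) d.
Proof.
  induction l1 as [|b l1 IH]; [reflexivity|].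
  destruct l1; simpl in *; [reflexivity|exact IH].
Qed.

Lemma In_last (d : X) l : l <> [] -> In (last l d) l.
Proof.
  induction l as [|a l IH]; [congruence|]. intros _. destruct l as [|b l].
  - left; reflexivity.
  - rewrite last_cons_cons. right. apply IH. discriminate.
Qed.

Lemma last_neq_hd (x : X) l : NoDup (x :: l) -> l <> [] -> last l x <> x.
Proof.
  intros N Hl E. inversion N as [|? ? Hx _]; subst. apply Hx.
  rewrite <- E at 1. apply In_last; auto.
Qed.

Lemma NoDup_app_disjoint (l1 l2 : list X) x : NoDup (l1 ++ l2) -> In x l1 -> ~ In x l2.
Proof.
  induction l1 as [|a l1 IH]; [simpl; tauto|]. simpl. intros N [<-|I] J;
    inversion N as [|? ? Ha N']; subst.
  - apply Ha. apply in_or_app; right; exact J.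
  - exact (IH N' I J).
Qed.

Lemma split_at_first (P : X -> Prop) l : (exists z, In z l /\ P z) ->
  exists m y l2, l = m ++ y :: l2 /\ P y /\ forall z, In z m -> ~ P z.
Proof.
  induction l as [|a l IH]; intros [z [Hz Pz]]; [destruct Hz|].
  destruct (classic (P a)) as [Pa|Pa].
  - exists [], a, l. simpl. repeat split; auto.
  - destruct Hz as [<-|Hz]; [contradiction|].
    destruct IH as [m [y [l2 [-> [Py Hm]]]]]; [eauto|].
    exists (a :: m), y, l2. split; [reflexivity|]. split; [exact Py|].
    intros q [<-|Hq]; [exact Pa|exact (Hm q Hq)].
Qed.

Lemma max_nat_exists (P : nat -> Prop) N : (exists j, P j) -> (forall j, P j -> j < N) ->
  exists jm, P jm /\ forall j, P j -> j <= jm.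
Proof.
  revert P. induction N as [|N IH]; intros P [j Pj] HN; [specialize (HN j Pj); lia|].
  destruct (classic (P N)) as [PN|PN].
  - exists N. split; auto. intros k Pk. specialize (HN k Pk). lia.
  - apply IH; eauto. intros k Pk. specialize (HN k Pk).
    assert (k <> N) by (intros ->; contradiction). lia.
Qed.

Lemma chain_app R l1 (a : X) l2 :
  chain R (l1 ++ a :: l2) <-> chain R (l1 ++ [a]) /\ chain R (a :: l2).
Proof.
  induction l1 as [|b l1 IH]; simpl.
  - tauto.
  - destruct l1 as [|c l1]; simpl in *; [tauto|]. rewrite IH. tauto.
Qed.

Lemma chain_app_l R l1 l2 : chain R (l1 ++ l2) -> chain R l1.
Proof.
  induction l1 as [|a l1 IH]; [simpl; auto|]. destruct l1 as [|b l1]; [simpl; auto|].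
  intros [H C]. split; auto.
Qed.

Lemma chain_tl R (a : X) l : chain R (a :: l) -> chain R l.
Proof. destruct l; simpl; tauto. Qed.

Lemma chain_last_edge R m (b d : X) : m <> [] -> chain R (m ++ [b]) -> R (last m d) b.
Proof.
  intros Hm C. destruct (exists_last Hm) as [m' [a ->]]. rewrite last_last.
  rewrite <- app_assoc in C. apply chain_app in C. simpl in C. tauto.
Qed.

Lemma chain_nth R l j (d : X) : chain R l -> S j < length l -> R (nth j l d) (nth (S j) l d).
Proof.
  revert j. induction l as [|a l IH]; intros j C Hj; [simpl in Hj; lia|].
  destruct l as [|b l]; [simpl in Hj; lia|]. destruct C as [Rab C].
  destruct j as [|j]; [exact Rab|]. apply (IH j C). simpl in *; lia.
Qed.

Lemma chain_rev R l : (forall x y, R x y -> R y x) -> chain R l -> chain R (rev l).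
Proof.
  intros Hs. induction l as [|a l IH]; [simpl; tauto|].
  destruct l as [|b l]; [simpl; tauto|].
  intros [Hab Hc]. change (rev (a :: b :: l)) with ((rev l ++ [b]) ++ [a]).
  specialize (IH Hc). simpl in IH.
  rewrite <- app_assoc. apply chain_app. split; [exact IH|].
  simpl. split; [apply Hs; exact Hab|exact I].
Qed.

Lemma chain_impl R R' l : (forall x y, In x l -> In y l -> R x y -> R' x y) ->
  chain R l -> chain R' l.
Proof.
  induction l as [|a l IH]; [simpl; tauto|].
  destruct l as [|b l]; [simpl; tauto|].
  intros H [Hab Hc]. split.
  - apply H; simpl; auto.
  - apply IH; [|exact Hc]. intros x y Hx Hy. apply H; simpl in *; auto.
Qed.

Lemma chain_exit R (P : X -> Prop) l h : chain R (h :: l) -> P h ->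
  (exists z, In z l /\ ~ P z) ->
  exists l1 v u l2, h :: l = l1 ++ v :: u :: l2 /\ P v /\ ~ P u /\ R v u.
Proof.
  revert h. induction l as [|a l IH]; intros h C Ph [z [Hz Pz]]; [destruct Hz|].
  destruct C as [Rha C]. destruct (classic (P a)) as [Pa|Pa].
  - destruct Hz as [<-|Hz]; [contradiction|].
    destruct (IH a C Pa) as [l1 [v [u [l2 [Hl [Pv [Pu Rvu]]]]]]]; [eauto|].
    exists (h :: l1), v, u, l2. rewrite Hl. auto.
  - exists [], h, a, l. simpl. auto.
Qed.

Definition walk R (x y : X) l := hd_error l = Some x /\ last l x = y /\ chain R l.

Lemma walk_cons R x y l :
  walk R x y l <-> exists l', l = x :: l' /\ last l' x = y /\ chain R (x :: l').
Proof.
  unfold walk. split.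
  - intros [H1 [H2 H3]]. destruct l as [|a l']; [discriminate|].
    injection H1 as ->. exists l'. rewrite last_cons_self in H2. auto.
  - intros [l' [-> [H2 H3]]]. rewrite last_cons_self. auto.
Qed.

Lemma walk_In_hd R x y l : walk R x y l -> In x l.
Proof. intros H. apply walk_cons in H as [l' [-> _]]. left; auto. Qed.

Lemma walk_In_last R x y l : walk R x y l -> In y l.
Proof. intros [H1 [<- _]]. apply In_last. destruct l; discriminate. Qed.

Lemma path_walk R x y l : path_of R x y l -> walk R x y l.
Proof. intros [a [b [c _]]]; split; auto. Qed.

Lemma path_In_hd R x y l : path_of R x y l -> In x l.
Proof. intros P; apply path_walk in P; eapply walk_In_hd; eauto. Qed.

Lemma path_In_last R x y l : path_of R x y l -> In y l.
Proof. intros P; apply path_walk in P; eapply walk_In_last; eauto. Qed.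

Lemma walk_app R x y z l1 l2 :
  walk R x y l1 -> walk R y z (y :: l2) -> walk R x z (l1 ++ l2).
Proof.
  intros H1 H2. apply walk_cons in H1 as [l1' [-> [E1 C1]]].
  apply walk_cons in H2 as [l2' [E [E2 C2]]]. injection E as <-.
  apply walk_cons. exists (l1' ++ l2). split; [reflexivity|]. split.
  - destruct l2 as [|b l2]; simpl in *.
    + rewrite app_nil_r. subst; reflexivity.
    + rewrite last_app_cons, (last_default _ _ y). exact E2.
  - change (x :: l1' ++ l2) with ((x :: l1') ++ l2).
    destruct (@exists_last _ (x :: l1')) as [m [b Hm]]; [discriminate|].
    assert (b = y) as -> by (rewrite <- last_cons_self, Hm, last_last in E1; exact E1).
    rewrite Hm, <- app_assoc. apply chain_app. rewrite <- Hm. auto.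
Qed.

Lemma walk_rev R x y l : (forall a b, R a b -> R b a) -> walk R x y l -> walk R y x (rev l).
Proof.
  intros Hs H. apply walk_cons in H as [l' [-> [E C]]].
  destruct (@exists_last _ (x :: l')) as [m [b Hm]]; [discriminate|].
  assert (b = y) as -> by (rewrite <- E, <- last_cons_self, Hm, last_last; reflexivity).
  split; [rewrite Hm, rev_app_distr; reflexivity|]. split.
  - apply last_last.
  - apply chain_rev; assumption.
Qed.

Lemma path_rev R x y l : (forall a b, R a b -> R b a) ->
  path_of R x y l -> path_of R y x (rev l).
Proof.
  intros Hs P. destruct (walk_rev _ _ _ _ Hs (path_walk _ _ _ _ P)) as [a [b c]].
  repeat split; auto. apply NoDup_rev, P.
Qed.

Lemma walk_to_path R x y l : walk R x y l -> exists l', path_of R x y l' /\ incl l' l.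
Proof.
  intros H. apply walk_cons in H as [l' [-> [E C]]]. revert x E C.
  induction l' as [|a l' IH]; intros x E C.
  - simpl in E. subst. exists [y]. split; [|apply incl_refl].
    repeat split; simpl; auto. constructor; [simpl; tauto|constructor].
  - rewrite (last_default _ _ a), last_cons_self in E. destruct C as [Hxa C].
    destruct (IH a E C) as [p [[P1 [P2 [P3 P4]]] Pinc]].
    destruct p as [|a' p]; [discriminate|]. injection P1 as ->.
    destruct (classic (In x (a :: p))) as [Hin|Hnin].
    + apply in_split in Hin as [q1 [q2 Hq]]. exists (x :: q2). rewrite Hq in P2, P3, P4. split.
      * split; [reflexivity|]. split.
        -- rewrite (last_default _ _ a), <- P2. symmetry. apply last_app_cons.
        -- split; [apply chain_app in P3; tauto|]. apply NoDup_app_remove_l in P4. exact P4.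
      * intros z Hz. right. apply Pinc. rewrite Hq. apply in_or_app. right; exact Hz.
    + exists (x :: a :: p). split.
      * split; [reflexivity|]. split; [rewrite last_cons_cons, (last_default _ _ a); exact P2|].
        split; [split; assumption|]. constructor; assumption.
      * intros z [Hz|Hz]; [left; exact Hz|right; apply Pinc; exact Hz].
Qed.

Lemma path_split R x y l1 (a : X) l2 : path_of R x y (l1 ++ a :: l2) ->
  path_of R x a (l1 ++ [a]) /\ path_of R a y (a :: l2).
Proof.
  intros [H1 [H2 [H3 H4]]]. apply chain_app in H3 as [C1 C2]. split.
  - split; [destruct l1; simpl in *; auto|]. split; [apply last_last|].
    split; [exact C1|]. apply NoDup_app_remove_r with (l' := l2).
    rewrite <- app_assoc. exact H4.
  - split; [reflexivity|]. split.
    + rewrite <- H2, last_app_cons. apply last_default.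
    + split; [exact C2|]. apply NoDup_app_remove_l in H4; exact H4.
Qed.

Lemma chain_walk_from R l1 x l2 y : chain R (l1 ++ x :: l2) -> In y (x :: l2) ->
  exists l', walk R x y l' /\ incl l' (x :: l2).
Proof.
  intros C Hy. apply chain_app in C as [_ C]. apply in_split in Hy as [m1 [m2 Hm]].
  exists (m1 ++ [y]). split.
  - split; [destruct m1; simpl in Hm; injection Hm; intros; subst; reflexivity|].
    split; [apply last_last|]. rewrite Hm in C. apply chain_app in C; tauto.
  - intros z Hz. rewrite Hm. apply in_app_or in Hz as [Hz|[<-|[]]];
      apply in_or_app; [left; auto|right; left; auto].
Qed.

Lemma chain_walk R l x y : (forall a b, R a b -> R b a) -> chain R l -> In x l -> In y l ->
  exists l', walk R x y l' /\ incl l' l.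
Proof.
  intros Hs C Hx Hy. apply in_split in Hx as [l1 [l2 ->]].
  apply in_app_or in Hy as [Hy|Hy].
  - apply in_split in Hy as [m1 [m2 ->]]. rewrite <- app_assoc in C. simpl in C.
    destruct (chain_walk_from R m1 y (m2 ++ x :: l2) x C) as [l' [W1 I1]].
    { right. apply in_or_app. right; left; auto. }
    exists (rev l'). split; [apply walk_rev; auto|].
    intros z Hz. apply in_rev, I1 in Hz. rewrite <- app_assoc. apply in_or_app. right. exact Hz.
  - destruct (chain_walk_from R l1 x l2 y C Hy) as [l' [W1 I1]]. exists l'. split; auto.
    intros z Hz. apply I1 in Hz. apply in_or_app; right; exact Hz.
Qed.

End Lists.

Definition tree_depth {X : Type} (ET : X -> X -> Prop) (r t : X) (n : nat) : Prop :=
  exists l, path_of ET r t l /\ length l = S n.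

Section TreeOrder.
Context {X : Type} {VT : X -> Prop} {ET : X -> X -> Prop} {r : X}.
Hypothesis HT : is_rooted_tree VT ET r.

Lemma root_path y : VT y -> exists l, path_of ET r y l.
Proof. destruct HT as [[_ [_ [_ [H _]]]] Hr]. intros; apply H; auto. Qed.

Lemma tree_path_unique x y l1 l2 : path_of ET x y l1 -> path_of ET x y l2 -> l1 = l2.
Proof. destruct HT as [[_ [_ [_ [_ H]]]] _]. apply H. Qed.

Lemma tle_l {u v} : tle VT ET r u v -> VT u.
Proof. intros [H _]; exact H. Qed.

Lemma tle_r {u v} : tle VT ET r u v -> VT v.
Proof. intros [_ [H _]]; exact H. Qed.

Lemma tle_In u v l : tle VT ET r u v -> path_of ET r v l -> In u l.
Proof.
  intros [_ [_ [l0 [P I]]]] Pl. rewrite <- (tree_path_unique _ _ _ _ P Pl). exact I.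
Qed.

Lemma root_path_VT v l : path_of ET r v l -> forall z, In z l -> VT z.
Proof.
  destruct HT as [[HE _] Hr]. intros [H1 [_ [C _]]]. destruct l as [|a l]; [discriminate|].
  injection H1 as ->. revert C. generalize r Hr. induction l as [|b l IH]; intros a Ha C z Hz.
  - destruct Hz as [<-|[]]; exact Ha.
  - destruct C as [Cab C]. destruct Hz as [<-|Hz]; [exact Ha|].
    exact (IH b (proj2 (HE _ _ Cab)) C z Hz).
Qed.

Lemma tle_of_path u v l : path_of ET r v l -> In u l -> tle VT ET r u v.
Proof.
  intros P I. split; [eapply root_path_VT; eauto|].
  split; [eapply root_path_VT; [eauto|eapply path_In_last; eauto]|]. exists l; auto.
Qed.

Lemma tle_refl v : VT v -> tle VT ET r v v.
Proof.
  intros Hv. destruct (root_path v Hv) as [l P]. eapply tle_of_path; [exact P|].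
  eapply path_In_last; eauto.
Qed.

Lemma tle_root v : VT v -> tle VT ET r r v.
Proof.
  intros Hv. destruct (root_path v Hv) as [l P]. eapply tle_of_path; [exact P|].
  eapply path_In_hd; eauto.
Qed.

Lemma tle_split u v : tle VT ET r u v -> exists l1 l2,
  path_of ET r v (l1 ++ u :: l2) /\ path_of ET r u (l1 ++ [u]) /\ path_of ET u v (u :: l2).
Proof.
  intros [_ [_ [l [P I]]]]. apply in_split in I as [l1 [l2 ->]].
  exists l1, l2. split; auto. apply path_split in P; tauto.
Qed.

Lemma tle_trans u v w : tle VT ET r u v -> tle VT ET r v w -> tle VT ET r u w.
Proof.
  intros H1 H2. destruct (tle_split _ _ H2) as [l1 [l2 [P [P1 _]]]].
  eapply tle_of_path; [exact P|]. apply in_or_app.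
  pose proof (tle_In _ _ _ H1 P1) as I. apply in_app_or in I as [I|[I|[]]]; auto.
  right; left; exact I.
Qed.

Lemma tle_antisym u v : tle VT ET r u v -> tle VT ET r v u -> u = v.
Proof.
  intros H1 H2. destruct (tle_split _ _ H1) as [l1 [l2 [P [P1 _]]]].
  pose proof (tle_In _ _ _ H2 P1) as I.
  destruct P as [_ [Pl [_ Pnd]]]. rewrite last_app_cons in Pl.
  assert (J : In v (u :: l2)) by (rewrite <- Pl; apply In_last; discriminate).
  apply in_app_or in I as [I|[I|[]]]; [|exact I].
  exfalso. exact (NoDup_app_disjoint _ _ _ Pnd I J).
Qed.

Lemma tle_below_total u w y : tle VT ET r u y -> tle VT ET r w y ->
  tle VT ET r u w \/ tle VT ET r w u.
Proof.
  intros H1 H2. destruct (tle_split _ _ H1) as [l1 [l2 [P [P1 _]]]].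
  pose proof (tle_In _ _ _ H2 P) as I. apply in_app_or in I as [I|[->|I]].
  - right. eapply tle_of_path; [exact P1|]. apply in_or_app; left; exact I.
  - left. apply tle_refl. eapply tle_l; eauto.
  - left. apply in_split in I as [m1 [m2 Hm]]. rewrite Hm, app_comm_cons, app_assoc in P.
    apply path_split in P as [P' _]. eapply tle_of_path; [exact P'|].
    apply in_or_app; left. apply in_or_app; right; left; reflexivity.
Qed.

Lemma tle_interval_path u v l2 : path_of ET u v (u :: l2) -> tle VT ET r u v ->
  forall z, In z (u :: l2) -> tle VT ET r u z /\ tle VT ET r z v.
Proof.
  intros Pu H z Hz. destruct (tle_split _ _ H) as [l1 [m2 [P [_ P2]]]].
  rewrite (tree_path_unique _ _ _ _ Pu P2) in Hz. split.
  - apply in_split in Hz as [q1 [q2 Hq]]. rewrite Hq, app_assoc in P.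
    apply path_split in P as [P' _]. eapply tle_of_path; [exact P'|].
    destruct q1 as [|c q1]; simpl in Hq; injection Hq; intros; subst.
    + apply in_or_app; right; left; reflexivity.
    + apply in_or_app; left. apply in_or_app; right; left; reflexivity.
  - eapply tle_of_path; [exact P|]. apply in_or_app; right; exact Hz.
Qed.

Lemma tree_depth_exists t : VT t -> exists n, tree_depth ET r t n.
Proof.
  intros Ht. destruct (root_path t Ht) as [[|a l] P]; [destruct P; discriminate|].
  exists (length l), (a :: l). auto.
Qed.

Lemma tle_tree_depth w t a b : tle VT ET r w t -> tree_depth ET r w a -> tree_depth ET r t b ->
  a <= b /\ (a = b -> w = t).
Proof.
  intros H [l [P E]] [m [Q F]]. destruct (tle_split _ _ H) as [l1 [l2 [P0 [P1 _]]]].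
  rewrite (tree_path_unique _ _ _ _ P P1) in E. rewrite (tree_path_unique _ _ _ _ Q P0) in F.
  rewrite length_app in E, F. simpl in E, F. split; [lia|].
  intros ->. assert (l2 = []) as -> by (destruct l2; [reflexivity|simpl in *; lia]).
  destruct P0 as [_ [L _]]. rewrite last_last in L. exact L.
Qed.

End TreeOrder.

(** * Normal trees of a graph are normal trees of its connectoid *)

Section GraphRays.
Context {V : Type} (E : V -> V -> Prop).
Hypothesis Esym : forall x y, E x y -> E y x.
Variable R : nat -> V.
Hypothesis R_edge : forall n, E (R n) (R (S n)).
Hypothesis R_inj : forall m n, R m = R n -> m = n.

Definition ray_segment (i j : nat) (z : V) : Prop := exists k, i <= k <= j /\ R k = z.

Lemma ray_path a k : path_of E (R a) (R (a + k)) (map R (seq a (S k))).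
Proof.
  split; [reflexivity|]. split; [rewrite seq_S, map_app; apply last_last|]. split.
  - revert a. induction k as [|k IH]; intros a; [simpl; auto|].
    simpl. destruct k as [|k]; [simpl; auto|]. split; [apply R_edge|apply IH].
  - apply NoDup_map_NoDup_ForallPairs; [|apply seq_NoDup].
    intros x y _ _ H. apply R_inj; auto.
Qed.

Lemma ray_segment_fam i j : graph_fam E (ray_segment i j).
Proof.
  split.
  - exists (map R (seq i (S (j - i)))). intros z [k [Hk <-]]. apply in_map, in_seq. lia.
  - intros x y [a [Ha <-]] [b [Hb <-]]. destruct (le_lt_dec a b) as [Hab|Hab].
    + exists (map R (seq a (S (b - a)))). split.
      * replace b with (a + (b - a)) at 1 by lia. apply ray_path.
      * intros z Hz. apply in_map_iff in Hz as [k [<- Hk]]. apply in_seq in Hk.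
        exists k; split; [lia|auto].
    + exists (rev (map R (seq b (S (a - b))))). split.
      * apply path_rev; auto. replace a with (b + (a - b)) at 1 by lia. apply ray_path.
      * intros z Hz. apply in_rev, in_map_iff in Hz as [k [<- Hk]]. apply in_seq in Hk.
        exists k; split; [lia|auto].
Qed.

(* The beads are the edges [{R n, R (S n)}] of the ray. *)
Lemma ray_necklace : necklace (graph_fam E) (fun z => exists n, R n = z).
Proof.
  split.
  - intros x y [a <-] [b <-]. exists (ray_segment (min a b) (max a b)).
    split; [apply ray_segment_fam|].
    split; [intros z [k [_ <-]]; eauto|]. split; [exists a|exists b]; split; auto; lia.
  - exists (fun n => ray_segment n (S n)). split; [|split].
    + intros n. split; [apply ray_segment_fam|]. intros x y Hx Hy.
      exists (ray_segment n (S n)). split; [apply ray_segment_fam|]. auto.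
    + intros x. split; [intros [n <-]; exists n, n; split; [lia|auto]|].
      intros [n [k [_ <-]]]. eauto.
    + intros i j. split.
      * intros [x [[a [Ha <-]] [b [Hb Hab]]]]. apply R_inj in Hab. lia.
      * intros H. exists (R (max i j)). split; exists (max i j); split; auto; lia.
Qed.

End GraphRays.

Section GraphNormalTree.
Context {V : Type} (E : V -> V -> Prop).
Hypothesis Esym : forall x y, E x y -> E y x.
Context {VT : V -> Prop} {ET : V -> V -> Prop} {r : V}.
Hypothesis HG : graph_normal_tree E VT ET r.

Let HT : is_rooted_tree VT ET r := proj1 HG.
Let ET_E : forall x y, ET x y -> E x y := proj1 (proj2 HG).
Let T_path_comparable := proj2 (proj2 HG).

(* Induction along the path: at the first tree vertex [y] after [x] the two are
   comparable by normality, and the least tree vertex is the smaller of [x] and the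
   least one after [y]. *)
Lemma graph_path_tle_least x l : chain E (x :: l) -> NoDup (x :: l) -> VT x ->
  exists w, In w (x :: l) /\ VT w /\ forall z, In z (x :: l) -> VT z -> tle VT ET r w z.
Proof.
  remember (length l) as n eqn:Hn. assert (Hlen : length l <= n) by lia. clear Hn.
  revert x l Hlen. induction n as [|n IH]; intros x l Hlen C N Hx.
  { destruct l; [|simpl in Hlen; lia]. exists x. split; [left; auto|]. split; auto.
    intros z [<-|[]] _. apply (tle_refl HT); auto. }
  destruct (classic (exists z, In z l /\ VT z)) as [Ex|NEx].
  2:{ exists x. split; [left; auto|]. split; auto. intros z [<-|Hz] Vz.
      - apply (tle_refl HT); auto.
      - exfalso; eauto. }
  destruct (split_at_first _ _ Ex) as [m [y [l2 [-> [Vy Hm]]]]].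
  change (x :: m ++ y :: l2) with ((x :: m) ++ y :: l2) in C, N.
  apply chain_app in C as [Cxy Cy].
  assert (Nxy : NoDup ((x :: m) ++ [y])).
  { apply NoDup_app_remove_r with (l' := l2). rewrite <- app_assoc. exact N. }
  apply NoDup_app_remove_l in N.
  assert (Hcomp : tcomparable VT ET r x y).
  { apply (T_path_comparable x y ((x :: m) ++ [y])); auto.
    - repeat split; auto. apply last_last.
    - intros z Hz H1 H2. apply in_app_or in Hz as [[<-|Hz]|[<-|[]]]; try congruence.
      apply Hm; auto. }
  destruct (IH y l2) as [w' [Iw' [Vw' Hw']]]; auto.
  { rewrite length_app in Hlen; simpl in Hlen; lia. }
  assert (Hbelow : forall z, In z (x :: m ++ y :: l2) -> VT z -> z = x \/ In z (y :: l2)).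
  { intros z [<-|Hz] Vz; auto. apply in_app_or in Hz as [Hz|Hz]; auto.
    exfalso; eapply Hm; eauto. }
  destruct (classic (tle VT ET r w' x)) as [Hwx|Hwx].
  - exists w'. split; [right; apply in_or_app; right; exact Iw'|]. split; auto.
    intros z Hz Vz. destruct (Hbelow z Hz Vz) as [->|Hz']; auto.
  - assert (Hxw : tle VT ET r x w').
    { assert (Hxy : tle VT ET r x y).
      { destruct Hcomp as [H|H]; auto. exfalso. apply Hwx.
        apply (tle_trans HT w' y x); auto. apply Hw'; [left|]; auto. }
      destruct (tle_below_total HT x w' y) as [H|H]; auto.
      - apply Hw'; [left|]; auto.
      - contradiction. }
    exists x. split; [left; auto|]. split; auto.
    intros z Hz Vz. destruct (Hbelow z Hz Vz) as [->|Hz']; [apply (tle_refl HT); auto|].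
    eapply (tle_trans HT); eauto.
Qed.

Lemma tle_graph_path a b : tle VT ET r a b ->
  exists l, path_of E a b l /\ forall z, In z l -> tle VT ET r a z /\ tle VT ET r z b.
Proof.
  intros H. destruct (tle_split _ _ H) as [l1 [l2 [_ [_ P2]]]].
  exists (a :: l2). split.
  - destruct P2 as [p1 [p2 [p3 p4]]]. repeat split; auto.
    eapply chain_impl; [|exact p3]. intros; apply ET_E; auto.
  - apply (tle_interval_path HT); auto.
Qed.

Definition tinterval (a b z : V) : Prop := tle VT ET r a z /\ tle VT ET r z b.

Lemma tinterval_sub a b x y : tle VT ET r a x -> tle VT ET r y b ->
  forall z, tinterval x y z -> tinterval a b z.
Proof. intros Hax Hyb z [H1 H2]. split; eapply (tle_trans HT); eauto. Qed.

Lemma tinterval_fam a b : tle VT ET r a b -> graph_fam E (tinterval a b).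
Proof.
  intros Hab. split.
  - destruct (root_path HT b (tle_r Hab)) as [l P]. exists l.
    intros z [_ Hz]. eapply (tle_In HT); eauto.
  - intros x y [Hx1 Hx2] [Hy1 Hy2].
    destruct (tle_below_total HT x y b Hx2 Hy2) as [H|H];
      destruct (tle_graph_path _ _ H) as [l [P Hl]].
    + exists l. split; auto. intros z Hz. apply (tinterval_sub _ _ x y), Hl; auto.
    + exists (rev l). split; [apply path_rev; auto|].
      intros z Hz. apply in_rev in Hz. apply (tinterval_sub _ _ y x), Hl; auto.
Qed.

Lemma tinterval_conn a b : tle VT ET r a b -> conn_set (graph_fam E) (tinterval a b).
Proof.
  intros Hab x y [Hx1 Hx2] [Hy1 Hy2].
  assert (Hxx : tle VT ET r x x) by (apply (tle_refl HT); eapply tle_l; eauto).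
  assert (Hyy : tle VT ET r y y) by (apply (tle_refl HT); eapply tle_l; eauto).
  destruct (tle_below_total HT x y b Hx2 Hy2) as [H|H].
  - exists (tinterval x y). split; [apply tinterval_fam; auto|].
    split; [apply tinterval_sub; auto|]. split; split; auto.
  - exists (tinterval y x). split; [apply tinterval_fam; auto|].
    split; [apply tinterval_sub; auto|]. split; split; auto.
Qed.

Lemma graph_normal_weak_normal : weak_normal_tree (graph_fam E) VT ET r.
Proof.
  split; [exact HT|]. split.
  - intros C HC u v Cu Cv Vu Vv _.
    destruct (HC u v Cu Cv) as [F [[_ HF] [FC [Fu Fv]]]].
    destruct (HF u v Fu Fv) as [l [P Pl]].
    destruct l as [|x l]; [destruct P; discriminate|].
    assert (x = u) as -> by (destruct P as [P _]; injection P; auto).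
    destruct (graph_path_tle_least u l) as [w [Iw [Vw Hw]]]; try apply P; auto.
    exists w. split; [apply FC, Pl, Iw|].
    split; apply Hw; auto; [left; auto|eapply path_In_last; eauto].
  - intros u v Huv. exists (tinterval u v). split; [apply tinterval_conn; auto|].
    split; [split; auto; apply (tle_refl HT); eapply tle_l; eauto|].
    split; [split; auto; apply (tle_refl HT); eapply tle_r; eauto|].
    intros x [H1 _] [H2 H3]. apply H3. eapply (tle_antisym HT); eauto.
Qed.

Lemma graph_normal_normal : normal_tree (graph_fam E) VT ET r.
Proof.
  split; [apply graph_normal_weak_normal|]. intros R [_ [HR_edge HR_inj]].
  exists (fun z => exists n, R n = z). split.
  - apply ray_necklace; auto.
  - exists 0. intros n _. eauto.
Qed.

End GraphNormalTree.

(** * Trees given by parent functions *)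

(* A tree on [W] given by a parent function [p]; the depth [d] makes it well founded. *)
Record rooted_parent_fn {X : Type} (W : X -> Prop) (p : X -> X) (d : X -> nat) (r : X)
  : Prop := {
  rp_root : W r;
  rp_depth_root : d r = 0;
  rp_parent : forall x, W x -> x <> r -> W (p x) /\ S (d (p x)) = d x;
  rp_depth_zero : forall x, W x -> d x = 0 -> x = r }.

Definition ancestor {X : Type} (W : X -> Prop) (p : X -> X) (d : X -> nat) (a x : X) : Prop :=
  W x /\ exists k, k <= d x /\ Nat.iter k p x = a.

Definition parent_edge {X : Type} (W : X -> Prop) (p : X -> X) (r x y : X) : Prop :=
  W x /\ W y /\ ((x <> r /\ p x = y) \/ (y <> r /\ p y = x)).

Lemma parent_edge_sym {X : Type} (W : X -> Prop) p (r x y : X) :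
  parent_edge W p r x y -> parent_edge W p r y x.
Proof. intros [a [b c]]. split; auto. split; auto. tauto. Qed.

Section ParentTree.
Context {X : Type} {W : X -> Prop} {p : X -> X} {d : X -> nat} {r : X}.
Hypothesis HP : rooted_parent_fn W p d r.

Lemma iter_parent x k : W x -> k <= d x ->
  W (Nat.iter k p x) /\ d (Nat.iter k p x) = d x - k.
Proof.
  intros Wx. induction k as [|k IH]; intros Hk.
  - simpl. split; auto. lia.
  - destruct IH as [W1 D1]; [lia|]. rewrite Nat.iter_succ.
    assert (Nat.iter k p x <> r) by (intros E; rewrite E, (rp_depth_root _ _ _ _ HP) in D1; lia).
    destruct (rp_parent _ _ _ _ HP _ W1 H) as [W2 D2]. split; auto. lia.
Qed.

Lemma ancestor_W a x : ancestor W p d a x -> W a.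
Proof. intros [Wx [k [Hk <-]]]. apply iter_parent; auto. Qed.

Lemma ancestor_refl x : W x -> ancestor W p d x x.
Proof. intros Wx. split; auto. exists 0; split; [lia|reflexivity]. Qed.

Lemma ancestor_depth a x : ancestor W p d a x -> d a <= d x /\ (d a = d x -> a = x).
Proof.
  intros [Wx [k [Hk <-]]]. destruct (iter_parent x k Wx Hk) as [_ ->]. split; [lia|].
  intros. assert (k = 0) as -> by lia. reflexivity.
Qed.

Lemma ancestor_trans a b c : ancestor W p d a b -> ancestor W p d b c -> ancestor W p d a c.
Proof.
  intros [Wb [k1 [H1 E1]]] [Wc [k2 [H2 <-]]]. split; auto. exists (k1 + k2).
  destruct (iter_parent c k2 Wc H2) as [_ D]. split; [lia|]. rewrite Nat.iter_add. auto.
Qed.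

Lemma ancestor_parent a x : ancestor W p d a x -> x <> a -> x <> r /\ ancestor W p d a (p x).
Proof.
  intros [Wx [[|k] [Hk E]]] Hne; [simpl in E; congruence|].
  assert (x <> r) by (intros ->; rewrite (rp_depth_root _ _ _ _ HP) in Hk; lia).
  split; auto. destruct (rp_parent _ _ _ _ HP x Wx H) as [W1 D1].
  split; auto. exists k. split; [lia|]. rewrite <- Nat.iter_succ_r. exact E.
Qed.

Lemma ancestor_child a x c : ancestor W p d a x -> W c -> c <> r -> p c = x ->
  ancestor W p d a c.
Proof.
  intros [Wx [k [Hk E]]] Wc Hc Hpc. destruct (rp_parent _ _ _ _ HP c Wc Hc) as [_ D].
  rewrite Hpc in D. split; auto. exists (S k). split; [lia|].
  rewrite Nat.iter_succ_r, Hpc. exact E.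
Qed.

Lemma not_ancestor_parent a : W a -> a <> r -> ~ ancestor W p d a (p a).
Proof.
  intros Wa Ha H. apply ancestor_depth in H as [H _].
  destruct (rp_parent _ _ _ _ HP a Wa Ha). lia.
Qed.

Lemma parent_edge_into_subtree a u v : parent_edge W p r u v ->
  ancestor W p d a v -> ~ ancestor W p d a u -> v = a /\ u = p a /\ a <> r.
Proof.
  intros [Wu [Wv [[Hu Hpu]|[Hv Hpv]]]] Av Au.
  - exfalso. apply Au. eapply ancestor_child; eauto.
  - destruct (classic (v = a)) as [->|Hne]; [auto|].
    exfalso. apply Au. rewrite <- Hpv. apply ancestor_parent; auto.
Qed.

Lemma parent_path_first_step x a b y l1 l2 :
  path_of (parent_edge W p r) x y (x :: a :: l1) ->
  path_of (parent_edge W p r) x y (x :: b :: l2) -> a <> r -> p a = x -> a = b.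
Proof.
  intros [_ [L1 [C1 N1]]] [_ [L2 [C2 N2]]] Ha Hpa.
  assert (Wa : W a) by (destruct C1 as [[_ [Wa _]] _]; exact Wa).
  assert (Dy : ancestor W p d a y).
  { destruct (classic (ancestor W p d a y)) as [H|H]; auto. exfalso.
    destruct (chain_exit _ (ancestor W p d a) l1 a (proj2 C1) (ancestor_refl a Wa))
      as [m1 [v [u [m2 [Hm [Pv [Pu Rvu]]]]]]].
    { exists y. split; auto. destruct l1 as [|c l1].
      - simpl in L1. subst y. exfalso. apply H, ancestor_refl; auto.
      - rewrite <- L1, !last_cons_cons. apply In_last. discriminate. }
    destruct (parent_edge_into_subtree a u v (parent_edge_sym _ _ _ _ _ Rvu) Pv Pu)
      as [_ [Hu _]].
    inversion N1 as [|? ? Hx _]; subst. apply Hx.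
    rewrite Hm. apply in_or_app. right; right; left; reflexivity. }
  destruct (classic (a = b)) as [|Hab]; auto. exfalso.
  assert (Nx : ~ ancestor W p d a x) by (rewrite <- Hpa; apply not_ancestor_parent; auto).
  destruct (chain_exit _ (fun z => ~ ancestor W p d a z) (b :: l2) x C2 Nx)
    as [m1 [v [u [m2 [Hm [Pv [Pu Rvu]]]]]]].
  { exists y. split; [|tauto]. rewrite <- L2, last_cons_cons. apply In_last. discriminate. }
  apply NNPP in Pu. destruct (parent_edge_into_subtree a v u Rvu Pu Pv) as [Hu [Hv _]].
  destruct m1 as [|c m1]; simpl in Hm; injection Hm as Hc Hm; [congruence|].
  inversion N2 as [|? ? Hx _]; subst. apply Hx.
  rewrite Hm. apply in_or_app. right; left; reflexivity.
Qed.

Lemma parent_path_unique x y l1 l2 :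
  path_of (parent_edge W p r) x y l1 -> path_of (parent_edge W p r) x y l2 -> l1 = l2.
Proof.
  revert x l2. induction l1 as [|a0 l1 IH]; intros x l2 P1 P2; [destruct P1; discriminate|].
  assert (a0 = x) as -> by (destruct P1 as [H _]; injection H; auto).
  destruct l2 as [|b0 l2]; [destruct P2; discriminate|].
  assert (b0 = x) as -> by (destruct P2 as [H _]; injection H; auto).
  destruct l1 as [|a l1]; destruct l2 as [|b l2]; auto.
  - exfalso. destruct P1 as [_ [L1 _]]. destruct P2 as [_ [L2 [_ N2]]]. simpl in L1.
    apply (last_neq_hd x (b :: l2) N2); [discriminate|]. rewrite last_cons_self in L2. congruence.
  - exfalso. destruct P2 as [_ [L2 _]]. destruct P1 as [_ [L1 [_ N1]]]. simpl in L2.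
    apply (last_neq_hd x (a :: l1) N1); [discriminate|]. rewrite last_cons_self in L1. congruence.
  - assert (a = b) as <-.
    { destruct (classic (a = b)) as [|Hab]; auto.
      pose proof P1 as [_ [_ [[[_ [_ Ea]] _] _]]].
      pose proof P2 as [_ [_ [[[_ [_ Eb]] _] _]]].
      destruct Ea as [[Hx Ea]|[Ha Ea]]; [destruct Eb as [[_ Eb]|[Hb Eb]]|].
      - congruence.
      - symmetry. eapply parent_path_first_step; eauto.
      - eapply parent_path_first_step; eauto. }
    f_equal. apply (IH a).
    + apply path_split with (l1 := [x]) in P1. apply P1.
    + apply path_split with (l1 := [x]) in P2. apply P2.
Qed.

Definition ancestry (x : X) : list X := map (fun k => Nat.iter k p x) (seq 0 (S (d x))).

Lemma ancestry_walk x : W x -> walk (parent_edge W p r) x r (ancestry x).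
Proof.
  intros Wx. split; [reflexivity|]. split.
  - unfold ancestry. rewrite seq_S, map_app. cbn [map]. rewrite last_last. simpl.
    destruct (iter_parent x (d x) Wx) as [W1 D1]; [lia|].
    apply (rp_depth_zero _ _ _ _ HP); auto. lia.
  - assert (H : forall k j, k + j <= d x ->
      chain (parent_edge W p r) (map (fun i => Nat.iter i p x) (seq k (S j)))).
    { intros k j. revert k. induction j as [|j IH]; intros k Hk; [simpl; auto|].
      change (seq k (S (S j))) with (k :: seq (S k) (S j)). cbn [map].
      destruct (iter_parent x k Wx) as [W1 D1]; [lia|].
      assert (Hne : Nat.iter k p x <> r)
        by (intros E; rewrite E, (rp_depth_root _ _ _ _ HP) in D1; lia).
      split.
      - split; auto. split; [apply (rp_parent _ _ _ _ HP _ W1 Hne)|]. left. split; auto.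
      - specialize (IH (S k)). simpl in IH. apply IH. lia. }
    apply (H 0 (d x)). lia.
Qed.

Lemma ancestry_NoDup x : W x -> NoDup (ancestry x).
Proof.
  intros Wx. apply NoDup_map_NoDup_ForallPairs; [|apply seq_NoDup].
  intros i j Hi Hj E. apply in_seq in Hi, Hj.
  destruct (iter_parent x i Wx) as [_ D1]; [lia|].
  destruct (iter_parent x j Wx) as [_ D2]; [lia|].
  rewrite E in D1. lia.
Qed.

Lemma root_parent_path x : W x -> path_of (parent_edge W p r) r x (rev (ancestry x)).
Proof.
  intros Wx.
  destruct (walk_rev _ _ _ _ (parent_edge_sym W p r) (ancestry_walk x Wx)) as [a [b c]].
  repeat split; auto. apply NoDup_rev, ancestry_NoDup; auto.
Qed.

Lemma parent_edge_tree : is_rooted_tree W (parent_edge W p r) r.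
Proof.
  split; [|exact (rp_root _ _ _ _ HP)].
  split; [intros x y [a [b _]]; auto|]. split; [apply parent_edge_sym|]. split.
  { intros x [Wx [_ [[Hx E]|[Hx E]]]];
      destruct (rp_parent _ _ _ _ HP x Wx Hx) as [_ D]; rewrite E in D; lia. }
  split; [|apply parent_path_unique].
  intros x y Wx Wy.
  assert (Hw : walk (parent_edge W p r) x y (ancestry x ++ tl (rev (ancestry y)))).
  { eapply walk_app; [apply ancestry_walk; auto|].
    destruct (root_parent_path y Wy) as [H1 [H2 [H3 _]]].
    destruct (rev (ancestry y)) as [|c m]; [discriminate|]. injection H1 as ->. split; auto. }
  apply walk_to_path in Hw as [l [Hl _]]. eauto.
Qed.

Lemma ancestor_tle a x : ancestor W p d a x -> tle W (parent_edge W p r) r a x.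
Proof.
  intros H. split; [eapply ancestor_W; eauto|]. split; [apply H|].
  exists (rev (ancestry x)). split; [apply root_parent_path, H|].
  apply in_rev. rewrite rev_involutive. destruct H as [Wx [k [Hk <-]]].
  apply in_map_iff. exists k. split; [reflexivity|]. apply in_seq. lia.
Qed.

End ParentTree.

Lemma ancestor_extend {X : Type} (W W' : X -> Prop) p p' d d' (r a x : X) :
  rooted_parent_fn W p d r -> (forall y, W y -> W' y /\ p' y = p y /\ d' y = d y) ->
  ancestor W p d a x -> ancestor W' p' d' a x.
Proof.
  intros HP Hs [Wx [k [Hk E]]]. destruct (Hs x Wx) as [W'x [_ Dx]]. split; auto.
  exists k. split; [lia|]. rewrite <- E. clear E.
  assert (forall j, j <= k -> Nat.iter j p' x = Nat.iter j p x); [|auto].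
  induction j as [|j IH]; intros Hj; [reflexivity|]. rewrite !Nat.iter_succ, IH by lia.
  destruct (iter_parent HP x j Wx) as [Wj _]; [lia|]. apply Hs; auto.
Qed.

(** * From a weak normal tree to a normal tree of the graph *)

Section Components.
Context {V : Type} (E : V -> V -> Prop).
Hypothesis Esym : forall x y, E x y -> E y x.

Definition reachable (a b : V) : Prop := exists l, walk E a b l.

Definition linked_avoiding (A : V -> Prop) (a b : V) : Prop :=
  exists l, walk E a b l /\ forall q, In q l -> ~ A q.

Definition attached (A : V -> Prop) (w t : V) : Prop :=
  exists z, linked_avoiding A t z /\ E w z.

Lemma linked_sym A a b : linked_avoiding A a b -> linked_avoiding A b a.
Proof.
  intros [l [Hl Hq]]. exists (rev l). split; [apply walk_rev; auto|].
  intros q Iq; apply Hq, in_rev, Iq.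
Qed.

Lemma linked_trans A a b c :
  linked_avoiding A a b -> linked_avoiding A b c -> linked_avoiding A a c.
Proof.
  intros [l1 [H1 Q1]] [l2 [H2 Q2]]. apply walk_cons in H2 as [l2' [-> [L2 C2]]].
  exists (l1 ++ l2'). split.
  - eapply walk_app; eauto. apply walk_cons. eauto.
  - intros q Iq. apply in_app_or in Iq as [Iq|Iq]; [apply Q1; auto|apply Q2; right; auto].
Qed.

Lemma linked_notin_r A a b : linked_avoiding A a b -> ~ A b.
Proof. intros [l [Hl Q]]. apply Q. eapply walk_In_last; eauto. Qed.

Lemma linked_anti (A A' : V -> Prop) a b :
  (forall x, A x -> A' x) -> linked_avoiding A' a b -> linked_avoiding A a b.
Proof. intros H [l [Hl Q]]. exists l. split; auto. intros q Iq Aq. exact (Q q Iq (H q Aq)). Qed.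

Lemma linked_edge A a b : ~ A a -> ~ A b -> E a b -> linked_avoiding A a b.
Proof.
  intros Ha Hb Hab. exists [a; b]. split; [repeat split; simpl; auto|].
  intros q [<-|[<-|[]]]; auto.
Qed.

Lemma linked_of_walk A l x y a b : walk E x y l -> (forall q, In q l -> ~ A q) ->
  In a l -> In b l -> linked_avoiding A a b.
Proof.
  intros [_ [_ C]] Q Ia Ib. destruct (chain_walk E l a b Esym C Ia Ib) as [l' [Hw Hi]].
  exists l'. split; auto.
Qed.

Lemma walk_enter A z y l : walk E z y l -> ~ A z -> A y ->
  exists z' y', linked_avoiding A z z' /\ E z' y' /\ A y' /\ In y' l.
Proof.
  intros Hw Nz Ay. apply walk_cons in Hw as [l' [-> [L C]]].
  destruct (split_at_first A (z :: l')) as [m [y' [rest [Hl [Ay' Hm]]]]].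
  { exists y. split; auto. rewrite <- L, <- last_cons_self. apply In_last. discriminate. }
  destruct m as [|a m]; injection Hl as Ha Hl; [subst; contradiction|subst a].
  rewrite Hl in C. change (z :: m ++ y' :: rest) with ((z :: m) ++ y' :: rest) in C.
  exists (last (z :: m) z), y'. split; [|split; [|split; [exact Ay'|]]].
  - exists (z :: m). split; [|exact Hm].
    repeat split. apply chain_app_l with (l2 := y' :: rest). exact C.
  - apply chain_app in C as [C _]. apply chain_last_edge; auto. discriminate.
  - rewrite Hl. right. apply in_or_app. right; left; auto.
Qed.

End Components.

Section WeakNormalLevels.
Context {V : Type} (E : V -> V -> Prop).
Hypothesis Esym : forall x y, E x y -> E y x.
Context {VT0 : V -> Prop} {ET0 : V -> V -> Prop} {r : V}.
Hypothesis HW : weak_normal_tree (graph_fam E) VT0 ET0 r.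
Let HT0 : is_rooted_tree VT0 ET0 r := proj1 HW.

Lemma weak_normal_reachable t : VT0 t -> reachable E r t.
Proof.
  intros Vt. destruct (proj2 (proj2 HW) r t (tle_root HT0 t Vt)) as [C [HC [Cr [Ct _]]]].
  destruct (HC r t Cr Ct) as [F [[_ HF] [_ [Fr Ft]]]]. destruct (HF r t Fr Ft) as [l [P _]].
  exists l. apply path_walk; auto.
Qed.

Lemma walk_conn_set x y l : walk E x y l -> conn_set (graph_fam E) (fun z => In z l).
Proof.
  intros [_ [_ C]] a b Ia Ib. exists (fun z => In z l). split; [|auto].
  split; [exists l; auto|]. intros u v Iu Iv.
  destruct (chain_walk E l u v Esym C Iu Iv) as [l' [Hw Hi]].
  destruct (walk_to_path _ _ _ _ Hw) as [l'' [P Hi']]. exists l''. split; auto.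
Qed.

(* Two vertices of the same level [n] are separated by any set containing all
   lower levels: a connecting walk would contain a common lower bound. *)
Lemma same_level_separated (A : V -> Prop) n :
  (forall t k, VT0 t -> tree_depth ET0 r t k -> k < n -> A t) ->
  forall t t', VT0 t -> VT0 t' -> tree_depth ET0 r t n -> tree_depth ET0 r t' n ->
  linked_avoiding E A t t' -> t = t'.
Proof.
  intros Hbelow t t' Vt Vt' Lt Lt' [l [Hl Q]].
  destruct (classic (tcomparable VT0 ET0 r t t')) as [[Hc|Hc]|Hnc].
  - apply (tle_tree_depth HT0 _ _ _ _ Hc Lt Lt'). reflexivity.
  - symmetry. apply (tle_tree_depth HT0 _ _ _ _ Hc Lt' Lt). reflexivity.
  - exfalso.
    destruct (proj1 (proj2 HW) _ (walk_conn_set _ _ _ Hl) t t'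
                (walk_In_hd _ _ _ _ Hl) (walk_In_last _ _ _ _ Hl) Vt Vt' Hnc)
      as [w [Iw [Hw1 Hw2]]].
    destruct (tree_depth_exists HT0 w (tle_l Hw1)) as [k Lw].
    destruct (tle_tree_depth HT0 _ _ _ _ Hw1 Lw Lt) as [Hk1 Hk2].
    destruct (tle_tree_depth HT0 _ _ _ _ Hw2 Lw Lt') as [_ Hk3].
    destruct (Nat.eq_dec k n) as [->|Hne].
    + apply Hnc. left. rewrite <- (Hk2 eq_refl), (Hk3 eq_refl). apply (tle_refl HT0); auto.
    + apply (Q w Iw). apply (Hbelow w k); [exact (tle_l Hw1)|exact Lw|lia].
Qed.

End WeakNormalLevels.

Section Stages.
Context {V : Type} (E : V -> V -> Prop).
Hypothesis Esym : forall x y, E x y -> E y x.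
Context {VT0 : V -> Prop} {ET0 : V -> V -> Prop} {r : V}.
Hypothesis HW : weak_normal_tree (graph_fam E) VT0 ET0 r.

Record partial_tree : Type := { ptW : V -> Prop; ptpar : V -> V; ptdepth : V -> nat }.

Definition pt_anc (s : partial_tree) : V -> V -> Prop := ancestor (ptW s) (ptpar s) (ptdepth s).

Record stage_inv (n : nat) (s : partial_tree) : Prop := {
  si_parent : rooted_parent_fn (ptW s) (ptpar s) (ptdepth s) r;
  si_edges : forall x, ptW s x -> x <> r -> E (ptpar s x) x;
  si_normal : forall x y l, ptW s x -> ptW s y -> path_of E x y l ->
    (forall z, In z l -> z <> x -> z <> y -> ~ ptW s z) -> pt_anc s x y \/ pt_anc s y x;
  si_levels : forall t k, VT0 t -> tree_depth ET0 r t k -> k < n -> ptW s t;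
  si_attach : forall z, ~ ptW s z -> reachable E r z ->
    exists m, ptW s m /\ attached E (ptW s) m z /\
      forall w, ptW s w -> attached E (ptW s) w z -> pt_anc s w m }.

Definition attach_path (s : partial_tree) (t : V) (q : list V) : Prop :=
  exists m q', q = m :: q' /\ q' <> [] /\ ptW s m /\ path_of E m t q /\
    (forall z, In z q' -> ~ ptW s z) /\
    (forall w, ptW s w -> attached E (ptW s) w t -> pt_anc s w m).

Definition pending (n : nat) (s : partial_tree) (t : V) : Prop :=
  VT0 t /\ tree_depth ET0 r t n /\ ~ ptW s t.

Definition apath (s : partial_tree) (t : V) : list V :=
  epsilon (inhabits nil) (attach_path s t).

Definition apath_pos (n : nat) (s : partial_tree) (x : V) : V * nat :=
  epsilon (inhabits (r, 0)) (fun tj =>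
    pending n s (fst tj) /\ S (snd tj) < length (apath s (fst tj)) /\
    nth (S (snd tj)) (apath s (fst tj)) r = x).

Definition step (n : nat) (s : partial_tree) : partial_tree := {|
  ptW x := ptW s x \/ exists t, pending n s t /\ In x (tl (apath s t));
  ptpar x := if excluded_middle_informative (ptW s x) then ptpar s x
             else nth (snd (apath_pos n s x)) (apath s (fst (apath_pos n s x))) r;
  ptdepth x := if excluded_middle_informative (ptW s x) then ptdepth s x
               else ptdepth s (hd r (apath s (fst (apath_pos n s x)))) + S (snd (apath_pos n s x))
|}.

Definition root_stage : partial_tree := {| ptW x := x = r; ptpar x := x; ptdepth _ := 0 |}.

Fixpoint stage (n : nat) : partial_tree :=
  match n with 0 => root_stage | S k => step k (stage k) end.

Lemma step_old n s x : ptW s x ->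
  ptW (step n s) x /\ ptpar (step n s) x = ptpar s x /\ ptdepth (step n s) x = ptdepth s x.
Proof.
  intros Wx. cbn. destruct (excluded_middle_informative (ptW s x)); [|contradiction]. auto.
Qed.

Section Step.
Variable n : nat.
Variable s : partial_tree.
Hypothesis HI : stage_inv n s.
Local Notation s' := (step n s).
Local Notation W := (ptW s).
Local Notation Q := (apath s).

Lemma apath_spec t : pending n s t -> attach_path s t (Q t).
Proof.
  intros [Vt [Lt Nt]]. unfold apath. apply epsilon_spec.
  destruct (si_attach _ _ HI t Nt (weak_normal_reachable E HW t Vt))
    as [m [Wm [[z [Cz Emz]] Hm]]].
  apply (linked_sym E Esym) in Cz. destruct Cz as [l [Hl Ql]].
  destruct (walk_to_path _ _ _ _ Hl) as [[|a l'] [P Pi]]; [destruct P; discriminate|].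
  assert (a = z) as -> by (destruct P as [P _]; injection P; auto).
  exists (m :: z :: l'), m, (z :: l'). split; [reflexivity|]. split; [discriminate|].
  split; [exact Wm|]. split; [|split; [intros q Iq; apply Ql, Pi, Iq|exact Hm]].
  destruct P as [_ [P2 [P3 P4]]].
  split; [reflexivity|]. split; [rewrite last_cons_cons, (last_default _ _ z); exact P2|].
  split; [split; auto|]. constructor; auto. intros Iq. apply (Ql m); auto.
Qed.

Lemma apath_shape t : pending n s t -> exists q', Q t = hd r (Q t) :: q' /\ q' <> [] /\
  W (hd r (Q t)) /\ path_of E (hd r (Q t)) t (Q t) /\ (forall z, In z q' -> ~ W z) /\
  (forall w, W w -> attached E W w t -> pt_anc s w (hd r (Q t))).
Proof.
  intros Ht. destruct (apath_spec t Ht) as [m [q' [E1 H]]].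
  exists q'. rewrite E1 in *. simpl. auto.
Qed.

Lemma apath_tail t x : pending n s t -> In x (tl (Q t)) -> ~ W x /\ linked_avoiding E W x t.
Proof.
  intros Ht Ix. destruct (apath_shape t Ht) as [q' [EQ [Hq [Wm [P [Hq' _]]]]]].
  rewrite EQ in Ix. simpl in Ix. split; [apply Hq'; auto|].
  destruct P as [_ [L [C _]]]. rewrite EQ in L, C. rewrite last_cons_self in L.
  assert (It : In t q') by (rewrite <- L; apply In_last; auto).
  destruct (chain_walk E q' x t Esym (chain_tl _ _ _ C) Ix It) as [l' [Hw Hi]].
  exists l'. split; auto.
Qed.

Lemma pending_separated t t' : pending n s t -> pending n s t' ->
  linked_avoiding E W t t' -> t = t'.
Proof.
  intros [V1 [L1 N1]] [V2 [L2 N2]] C.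
  apply (same_level_separated E Esym HW W n); auto. apply (si_levels _ _ HI).
Qed.

Lemma pending_linked t t' x y : pending n s t -> pending n s t' ->
  linked_avoiding E W t x -> linked_avoiding E W x y -> linked_avoiding E W y t' -> t = t'.
Proof.
  intros Ht Ht' H1 H2 H3. apply pending_separated; auto.
  apply (linked_trans E) with x; auto. apply (linked_trans E) with y; auto.
Qed.

Lemma apath_tails_disjoint t t' x : pending n s t -> pending n s t' ->
  In x (tl (Q t)) -> In x (tl (Q t')) -> t = t'.
Proof.
  intros H1 H2 I1 I2. apply (pending_linked t t' x x); auto.
  - apply (linked_sym E Esym), (apath_tail t); auto.
  - exists [x]. split; [repeat split|]. intros q [<-|[]]. apply (apath_tail t); auto.
  - apply (apath_tail t'); auto.
Qed.

Lemma apath_tail_nth t x : pending n s t ->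
  (In x (tl (Q t)) <-> exists j, S j < length (Q t) /\ x = nth (S j) (Q t) r).
Proof.
  intros Ht. destruct (apath_shape t Ht) as [q' [EQ _]]. rewrite EQ. simpl. split.
  - intros Ix. destruct (In_nth q' x r Ix) as [j [Hj <-]]. exists j. split; [lia|reflexivity].
  - intros [j [Hj ->]]. apply nth_In. lia.
Qed.

Lemma apath_pos_nth t j : pending n s t -> S j < length (Q t) ->
  apath_pos n s (nth (S j) (Q t) r) = (t, j).
Proof.
  intros Ht Hj. set (x := nth (S j) (Q t) r).
  assert (Hs : pending n s (fst (apath_pos n s x)) /\
               S (snd (apath_pos n s x)) < length (apath s (fst (apath_pos n s x))) /\
               nth (S (snd (apath_pos n s x))) (apath s (fst (apath_pos n s x))) r = x).
  { unfold apath_pos. apply epsilon_spec with (P := fun tj => pending n s (fst tj) /\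
      S (snd tj) < length (apath s (fst tj)) /\ nth (S (snd tj)) (apath s (fst tj)) r = x).
    exists (t, j). simpl. auto. }
  destruct (apath_pos n s x) as [t0 j0]. simpl in Hs. destruct Hs as [H0 [Hj0 E0]].
  assert (t0 = t) as ->.
  { apply (apath_tails_disjoint t0 t x); auto; apply apath_tail_nth; eauto. }
  f_equal. assert (S j0 = S j); [|lia].
  destruct (apath_shape t Ht) as [_ [_ [_ [_ [P _]]]]].
  apply (proj1 (NoDup_nth (Q t) r) (proj2 (proj2 (proj2 P)))); auto.
Qed.

Lemma step_apath_new t j : pending n s t -> S j < length (Q t) ->
  ~ W (nth (S j) (Q t) r) /\ ptW s' (nth (S j) (Q t) r) /\
  ptpar s' (nth (S j) (Q t) r) = nth j (Q t) r /\
  ptdepth s' (nth (S j) (Q t) r) = ptdepth s (hd r (Q t)) + S j.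
Proof.
  intros Ht Hj.
  assert (Ix : In (nth (S j) (Q t) r) (tl (Q t))) by (apply apath_tail_nth; eauto).
  assert (Nx : ~ W (nth (S j) (Q t) r)) by (apply (apath_tail t); auto).
  split; auto. cbn. split; [right; exists t; auto|].
  destruct (excluded_middle_informative (ptW s (nth (S j) (Q t) r))) as [H|H]; [contradiction|].
  rewrite apath_pos_nth; auto.
Qed.

Lemma step_apath t j : pending n s t -> j < length (Q t) ->
  ptW s' (nth j (Q t) r) /\ ptdepth s' (nth j (Q t) r) = ptdepth s (hd r (Q t)) + j.
Proof.
  intros Ht Hj. destruct j as [|j].
  - destruct (apath_shape t Ht) as [q' [EQ [_ [Wm _]]]].
    replace (nth 0 (Q t) r) with (hd r (Q t)) by (rewrite EQ; reflexivity).
    destruct (step_old n s _ Wm) as [A1 [_ ->]]. auto.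
  - destruct (step_apath_new t j Ht Hj) as [_ [A [_ B]]]. auto.
Qed.

Lemma step_parent : rooted_parent_fn (ptW s') (ptpar s') (ptdepth s') r.
Proof.
  destruct (si_parent _ _ HI) as [Hr Hd0 Hp Hz].
  destruct (step_old n s r Hr) as [Hr' [_ Hd0']].
  split; [exact Hr'|congruence| |].
  - intros x Wx Hx. destruct (classic (W x)) as [Wo|Wn].
    + destruct (step_old n s x Wo) as [_ [-> ->]]. destruct (Hp x Wo Hx) as [W1 D2].
      destruct (step_old n s _ W1) as [W2 [_ ->]]. auto.
    + destruct Wx as [Wx|[t [Ht Ix]]]; [contradiction|].
      apply apath_tail_nth in Ix as [j [Hj ->]]; auto.
      destruct (step_apath_new t j Ht Hj) as [_ [_ [-> ->]]].
      destruct (step_apath t j Ht) as [W2 ->]; [lia|]. split; auto.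
  - intros x Wx D. destruct (classic (W x)) as [Wo|Wn].
    + destruct (step_old n s x Wo) as [_ [_ D1]]. apply Hz; auto. congruence.
    + destruct Wx as [Wx|[t [Ht Ix]]]; [contradiction|].
      apply apath_tail_nth in Ix as [j [Hj ->]]; auto.
      destruct (step_apath_new t j Ht Hj) as [_ [_ [_ D1]]]. lia.
Qed.

Lemma step_edges x : ptW s' x -> x <> r -> E (ptpar s' x) x.
Proof.
  intros Wx Hx. destruct (classic (W x)) as [Wo|Wn].
  - destruct (step_old n s x Wo) as [_ [-> _]]. apply (si_edges _ _ HI); auto.
  - destruct Wx as [Wx|[t [Ht Ix]]]; [contradiction|].
    apply apath_tail_nth in Ix as [j [Hj ->]]; auto.
    destruct (step_apath_new t j Ht Hj) as [_ [_ [-> _]]].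
    destruct (apath_shape t Ht) as [q' [_ [_ [_ [P _]]]]]. apply chain_nth; auto. apply P.
Qed.

Lemma step_anc a x : pt_anc s a x -> pt_anc s' a x.
Proof. apply ancestor_extend with r; [apply HI|]. intros y Wy. apply step_old; auto. Qed.

Lemma step_anc_apath t i j : pending n s t -> i <= j -> j < length (Q t) ->
  pt_anc s' (nth i (Q t) r) (nth j (Q t) r).
Proof.
  intros Ht Hij Hj. destruct (step_apath t j Ht Hj) as [Wj Dj]. split; auto.
  exists (j - i). split; [lia|].
  assert (Hiter : forall k, k <= j ->
    Nat.iter k (ptpar s') (nth j (Q t) r) = nth (j - k) (Q t) r).
  { induction k as [|k IH]; intros Hk; [simpl; f_equal; lia|].
    rewrite Nat.iter_succ, IH by lia. replace (j - k) with (S (j - S k)) by lia.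
    apply (step_apath_new t (j - S k) Ht); lia. }
  rewrite Hiter by lia. f_equal; lia.
Qed.

Lemma step_anc_attach t w : pending n s t -> W w -> attached E W w t ->
  pt_anc s' w (nth 0 (Q t) r).
Proof.
  intros Ht Ww Ha. destruct (apath_shape t Ht) as [q' [EQ [_ [_ [_ [_ H]]]]]].
  replace (nth 0 (Q t) r) with (hd r (Q t)) by (rewrite EQ; reflexivity).
  apply step_anc, H; auto.
Qed.

Lemma step_normal_new x y l : ~ W x -> ptW s' x -> ptW s' y -> path_of E x y l ->
  (forall z, In z l -> z <> x -> z <> y -> ~ ptW s' z) -> pt_anc s' x y \/ pt_anc s' y x.
Proof.
  intros Nx Wx Wy P Hint.
  destruct Wx as [Wx|[t [Ht Ix]]]; [contradiction|].
  destruct (proj1 (apath_tail_nth t x Ht) Ix) as [i [Hi Ex]].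
  assert (HlW : forall z, In z l -> z <> x -> z <> y -> ~ W z).
  { intros z Iz H1 H2 Wz. apply (Hint z Iz H1 H2). left; exact Wz. }
  destruct (classic (W y)) as [Wyo|Nyo].
  - (* the path leaves the component of [x] in [G - W] exactly at [y] *)
    destruct (walk_enter E W x y l (path_walk _ _ _ _ P) Nx Wyo)
      as [z1 [y1 [C1 [E1 [W1 I1]]]]].
    assert (y1 = y) as ->.
    { destruct (classic (y1 = y)) as [|H]; auto. destruct (classic (y1 = x)) as [->|H'];
        [contradiction|exfalso; exact (HlW y1 I1 H' H W1)]. }
    right. apply (ancestor_trans (step_parent) _ (nth 0 (Q t) r)).
    + apply (step_anc_attach t); auto. exists z1. split; [|apply Esym; auto].
      apply (linked_trans E) with x; auto. apply (linked_sym E Esym), (apath_tail t); auto.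
    + rewrite Ex. apply step_anc_apath; auto. lia.
  - destruct Wy as [Wy|[t' [Ht' Iy]]]; [contradiction|].
    assert (Cxy : linked_avoiding E W x y).
    { apply (linked_of_walk E Esym W l x y); [apply (path_walk _ _ _ _ P)| |
        eapply path_In_hd; eauto|eapply path_In_last; eauto].
      intros q Iq. destruct (classic (q = x)) as [->|H1]; auto.
      destruct (classic (q = y)) as [->|H2]; auto. }
    assert (t = t') as <-.
    { apply (pending_linked t t' x y); auto.
      - apply (linked_sym E Esym), (apath_tail t); auto.
      - apply (apath_tail t'); auto. }
    destruct (proj1 (apath_tail_nth t y Ht) Iy) as [j [Hj ->]]. rewrite Ex.
    destruct (le_lt_dec i j); [left|right]; apply step_anc_apath; auto; lia.
Qed.

Lemma step_normal x y l : ptW s' x -> ptW s' y -> path_of E x y l ->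
  (forall z, In z l -> z <> x -> z <> y -> ~ ptW s' z) -> pt_anc s' x y \/ pt_anc s' y x.
Proof.
  intros Wx Wy P Hint.
  destruct (classic (W x)) as [Wxo|Nx]; [destruct (classic (W y)) as [Wyo|Ny]|].
  - destruct (si_normal _ _ HI x y l Wxo Wyo P) as [H|H].
    + intros z Iz H1 H2 Wz. apply (Hint z Iz H1 H2). left; exact Wz.
    + left; apply step_anc; auto.
    + right; apply step_anc; auto.
  - destruct (step_normal_new y x (rev l)) as [H|H]; auto.
    + apply path_rev; auto.
    + intros z Iz H1 H2. apply Hint; auto. apply in_rev; auto.
  - apply (step_normal_new x y l); auto.
Qed.

Lemma step_levels t k : VT0 t -> tree_depth ET0 r t k -> k < S n -> ptW s' t.
Proof.
  intros Vt Lt Hk.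
  destruct (Nat.eq_dec k n) as [->|Hne]; [|left; apply (si_levels _ _ HI t k); auto; lia].
  destruct (classic (W t)) as [Wt|Nt]; [left; auto|].
  assert (Ht : pending n s t) by (split; auto).
  right. exists t. split; auto.
  destruct (apath_shape t Ht) as [q' [EQ [Hq [_ [[_ [L _]] _]]]]].
  rewrite EQ in L |- *. simpl. rewrite last_cons_self in L. rewrite <- L. apply In_last; auto.
Qed.

(* The component of [z] in [G - ptW s'] lies in that of [t] in [G - W], and its
   greatest neighbour is the last vertex of [apath s t] adjacent to it. *)
Lemma step_attach_pending z t : ~ ptW s' z -> pending n s t -> linked_avoiding E W z t ->
  exists m, ptW s' m /\ attached E (ptW s') m z /\
    forall w, ptW s' w -> attached E (ptW s') w z -> pt_anc s' w m.
Proof.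
  intros Nz Ht Czt. pose proof Czt as [lz [Hlz Qlz]].
  assert (Wt : ptW s' t) by (destruct Ht as [? [? ?]]; apply (step_levels t n); auto).
  destruct (walk_enter E (ptW s') z t lz Hlz Nz Wt) as [z1 [y1 [C1 [E1 [W1 I1]]]]].
  destruct W1 as [W1|[t1 [Ht1 Iy1]]]; [exfalso; exact (Qlz y1 I1 W1)|].
  assert (Hlift : forall q, linked_avoiding E (ptW s') z q -> linked_avoiding E W z q)
    by (intros q; apply (linked_anti E); intros; left; auto).
  assert (t1 = t) as ->.
  { apply (pending_linked t1 t y1 z); auto.
    - apply (linked_sym E Esym), (apath_tail t1); auto.
    - apply (linked_of_walk E Esym W lz z t); auto; eapply walk_In_hd; eauto. }
  apply (apath_tail_nth t) in Iy1 as [j1 [Hj1 Ey1]]; auto.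
  set (near j := S j < length (Q t) /\ attached E (ptW s') (nth (S j) (Q t) r) z).
  destruct (max_nat_exists near (length (Q t))) as [jm [[Hjm Ajm] Hmax]].
  { exists j1. split; auto. exists z1. split; auto. rewrite <- Ey1. apply Esym; auto. }
  { intros j [Hj _]. lia. }
  exists (nth (S jm) (Q t) r). split; [apply (step_apath_new t jm Ht Hjm)|]. split; [exact Ajm|].
  intros w Ww [z2 [C2 E2]].
  destruct (classic (W w)) as [Wwo|Nw].
  - apply (ancestor_trans step_parent _ (nth 0 (Q t) r)).
    + apply (step_anc_attach t); auto. exists z2. split; auto.
      apply (linked_trans E) with z; auto. apply (linked_sym E Esym); auto.
    + apply step_anc_apath; auto; lia.
  - destruct Ww as [Ww|[tw [Htw Iw]]]; [contradiction|].
    assert (Cwz2 : linked_avoiding E W w z2).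
    { apply linked_edge; auto. eapply (linked_notin_r E); eauto. }
    assert (tw = t) as ->.
    { apply (pending_linked tw t w z); auto.
      - apply (linked_sym E Esym), (apath_tail tw); auto.
      - apply (linked_trans E) with z2; auto. apply (linked_sym E Esym); auto. }
    apply (apath_tail_nth t) in Iw as [jw [Hjw ->]]; auto.
    apply step_anc_apath; auto. assert (jw <= jm); [|lia].
    apply Hmax. split; auto. exists z2; auto.
Qed.

(* Otherwise the step does not touch the component of [z] in [G - W], which keeps
   its greatest neighbour. *)
Lemma step_attach_unchanged z : ~ ptW s' z -> reachable E r z ->
  ~ (exists t, pending n s t /\ linked_avoiding E W z t) ->
  exists m, ptW s' m /\ attached E (ptW s') m z /\
    forall w, ptW s' w -> attached E (ptW s') w z -> pt_anc s' w m.
Proof.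
  intros Nz Gz NA. assert (Nzo : ~ W z) by (intros H; apply Nz; left; exact H).
  destruct (si_attach _ _ HI z Nzo Gz) as [m [Wm [[z' [Cz' Emz']] Hm]]].
  assert (Hnew : forall q w t, linked_avoiding E W z q -> E w q -> pending n s t ->
                   In w (tl (Q t)) -> False).
  { intros q w t Cq Ewq Ht Iw. apply NA. exists t. split; auto.
    apply (linked_trans E) with q; auto. apply (linked_trans E) with w.
    - apply linked_edge; [eapply (linked_notin_r E); eauto|apply (apath_tail t); auto|].
      apply Esym; auto.
    - apply (apath_tail t); auto. }
  exists m. split; [left; exact Wm|]. split.
  - exists z'. split; auto. destruct Cz' as [l [Hl Ql]]. exists l. split; auto.
    intros q Iq [Wq|[t [Ht Iq']]]; [exact (Ql q Iq Wq)|].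
    assert (Czq : linked_avoiding E W z q) by (apply (linked_of_walk E Esym W l z z'); auto;
      eapply walk_In_hd; eauto).
    apply NA. exists t. split; auto. apply (linked_trans E) with q; auto. apply (apath_tail t); auto.
  - intros w Ww [z2 [C2 E2]].
    assert (C2o : linked_avoiding E W z z2) by (apply (linked_anti E W (ptW s')); auto;
      intros; left; auto).
    destruct Ww as [Wwo|[tw [Htw Iw]]].
    + apply step_anc, Hm; auto. exists z2; auto.
    + exfalso. exact (Hnew z2 w tw C2o E2 Htw Iw).
Qed.

Lemma step_inv : stage_inv (S n) s'.
Proof.
  split.
  - apply step_parent.
  - apply step_edges.
  - apply step_normal.
  - apply step_levels.
  - intros z Nz Gz.
    destruct (classic (exists t, pending n s t /\ linked_avoiding E W z t)) as [[t [Ht C]]|NA].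
    + apply (step_attach_pending z t); auto.
    + apply step_attach_unchanged; auto.
Qed.

End Step.
End Stages.

Section Limit.
Context {V : Type} (E : V -> V -> Prop).
Hypothesis Esym : forall x y, E x y -> E y x.
Context {VT0 : V -> Prop} {ET0 : V -> V -> Prop} {r : V}.
Hypothesis HW : weak_normal_tree (graph_fam E) VT0 ET0 r.

Local Notation stg := (@stage V E VT0 ET0 r).
Local Notation inv := (@stage_inv V E VT0 ET0 r).

Lemma root_stage_inv : inv 0 (@root_stage V r).
Proof.
  split; cbn.
  - split; cbn; auto. intros x -> H; congruence.
  - intros x -> H; congruence.
  - intros x y l -> -> _ _. left. apply ancestor_refl. reflexivity.
  - intros; lia.
  - intros z Nz [l Hl].
    destruct (walk_enter E (fun x => x = r) z r (rev l) (walk_rev _ _ _ _ Esym Hl) Nz eq_refl)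
      as [z1 [y1 [C1 [E1 [-> _]]]]].
    exists r. split; [reflexivity|]. split; [exists z1; split; auto|].
    intros w -> _. apply ancestor_refl. reflexivity.
Qed.

Lemma stage_inv_all n : inv n (stg n).
Proof.
  induction n as [|n IH]; [apply root_stage_inv|]. apply (step_inv E Esym HW n); auto.
Qed.

Lemma stage_mono n m x : n <= m -> ptW (stg n) x ->
  ptW (stg m) x /\ ptpar (stg m) x = ptpar (stg n) x /\ ptdepth (stg m) x = ptdepth (stg n) x.
Proof.
  intros Hnm. induction Hnm as [|m Hnm IH]; [auto|]. intros Wx.
  destruct (IH Wx) as [W1 [P1 D1]]. destruct (@step_old V E VT0 ET0 r m (stg m) x W1) as [W2 [P2 D2]].
  cbn [stage]. rewrite P2, D2. auto.
Qed.

Definition limW (x : V) : Prop := exists n, ptW (stg n) x.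

Definition lim_stage (x : V) : nat := epsilon (inhabits 0) (fun n => ptW (stg n) x).

Definition limpar (x : V) : V := ptpar (stg (lim_stage x)) x.

Definition limdepth (x : V) : nat := ptdepth (stg (lim_stage x)) x.

Lemma lim_agree n x : ptW (stg n) x ->
  limW x /\ limpar x = ptpar (stg n) x /\ limdepth x = ptdepth (stg n) x.
Proof.
  intros Wx. assert (Hf : ptW (stg (lim_stage x)) x).
  { unfold lim_stage. apply epsilon_spec with (P := fun n => ptW (stg n) x). eauto. }
  split; [exists n; auto|]. unfold limpar, limdepth.
  destruct (le_lt_dec n (lim_stage x)) as [H|H].
  - destruct (stage_mono n (lim_stage x) x H Wx) as [_ [A B]]. auto.
  - destruct (stage_mono (lim_stage x) n x (Nat.lt_le_incl _ _ H) Hf) as [_ [A B]]. auto.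
Qed.

Lemma lim_parent : rooted_parent_fn limW limpar limdepth r.
Proof.
  split.
  - exists 0. reflexivity.
  - destruct (lim_agree 0 r eq_refl) as [_ [_ ->]]. reflexivity.
  - intros x [n Wx] Hx. destruct (rp_parent _ _ _ _ (si_parent E _ _ (stage_inv_all n)) x Wx Hx)
      as [W1 D1].
    destruct (lim_agree n x Wx) as [_ [-> ->]]. destruct (lim_agree n _ W1) as [W3 [_ ->]]. auto.
  - intros x [n Wx] D. apply (rp_depth_zero _ _ _ _ (si_parent E _ _ (stage_inv_all n))); auto.
    destruct (lim_agree n x Wx) as [_ [_ D2]]. congruence.
Qed.

Lemma lim_anc n a x : pt_anc (stg n) a x -> ancestor limW limpar limdepth a x.
Proof.
  apply ancestor_extend with r; [apply (si_parent E _ _ (stage_inv_all n))|].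
  intros y Wy. apply lim_agree; auto.
Qed.

Lemma lim_graph_normal : graph_normal_tree E limW (parent_edge limW limpar r) r.
Proof.
  split; [apply (parent_edge_tree lim_parent)|]. split.
  - assert (Hedge : forall x, limW x -> x <> r -> E (limpar x) x).
    { intros x [n Wx] Hx. destruct (lim_agree n x Wx) as [_ [-> _]].
      apply (si_edges E _ _ (stage_inv_all n)); auto. }
    intros x y [Wx [Wy [[Hx <-]|[Hy <-]]]]; auto.
  - intros x y l P [a Wx] [b Wy] Hint.
    destruct (stage_mono a (a + b) x ltac:(lia) Wx) as [Wx' _].
    destruct (stage_mono b (a + b) y ltac:(lia) Wy) as [Wy' _].
    destruct (si_normal E _ _ (stage_inv_all (a + b)) x y l Wx' Wy' P) as [H|H].
    + intros z Iz H1 H2 Wz. apply (Hint z Iz H1 H2). exists (a + b); auto.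
    + left. apply (ancestor_tle lim_parent). eapply lim_anc; eauto.
    + right. apply (ancestor_tle lim_parent). eapply lim_anc; eauto.
Qed.

Lemma lim_contains t : VT0 t -> limW t.
Proof.
  intros Vt. destruct (tree_depth_exists (proj1 HW) t Vt) as [k Lk].
  exists (S k). apply (si_levels E _ _ (stage_inv_all (S k)) t k); auto.
Qed.

Lemma weak_normal_graph_normal :
  exists VT ET, graph_normal_tree E VT ET r /\ forall t, VT0 t -> VT t.
Proof. exists limW, (parent_edge limW limpar r). split; [apply lim_graph_normal|apply lim_contains]. Qed.

End Limit.

Theorem proposition5p1 (V : Type) (E : V -> V -> Prop)
  (Esym : forall x y, E x y -> E y x) (Eirr : forall x, ~ E x x)
  (U : V -> Prop) :
  ((exists (VT : V -> Prop) (ET : V -> V -> Prop) (r : V),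
      graph_normal_tree E VT ET r /\ (forall u, U u -> VT u)) <->
   (exists (VT : V -> Prop) (ET : V -> V -> Prop) (r : V),
      normal_tree (graph_fam E) VT ET r /\ (forall u, U u -> VT u))) /\
  ((exists (VT : V -> Prop) (ET : V -> V -> Prop) (r : V),
      normal_tree (graph_fam E) VT ET r /\ (forall u, U u -> VT u)) <->
   (exists (VT : V -> Prop) (ET : V -> V -> Prop) (r : V),
      weak_normal_tree (graph_fam E) VT ET r /\ (forall u, U u -> VT u))).
Proof.
  assert (weak_to_graph : forall VT ET r, weak_normal_tree (graph_fam E) VT ET r ->
    (forall u, U u -> VT u) ->
    exists VT' ET', graph_normal_tree E VT' ET' r /\ forall u, U u -> VT' u).
  { intros VT ET r HW HU. destruct (weak_normal_graph_normal E Esym HW)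
      as [VT' [ET' [HG HT]]]. exists VT', ET'. auto. }
  split; split.
  - intros [VT [ET [r [HG HU]]]]. exists VT, ET, r. split; auto. apply graph_normal_normal; auto.
  - intros [VT [ET [r [[HW _] HU]]]]. destruct (weak_to_graph VT ET r HW HU) as [VT' [ET' HG]].
    eauto.
  - intros [VT [ET [r [[HW _] HU]]]]. eauto.
  - intros [VT [ET [r [HW HU]]]]. destruct (weak_to_graph VT ET r HW HU) as [VT' [ET' [HG H']]].
    exists VT', ET', r. split; auto. apply graph_normal_normal; auto.
Qed.
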